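(* Let $\ell$ be any bounded proper binary scoring rule. Then there exists another proper binary scoring rule $\tilde\ell$ and a constant $c>0$ such that for every sufficiently large $T$ there exist forecasts $\mathbf{p}^{(T)}\in[0,1]^T$ and outcomes $\mathbf{x}^{(T)}\in\{0,1\}^T$ with $\mathrm{Reg}_\ell(\mathbf p^{(T)},\mathbf x^{(T)})=o(T)$ (as $T\to\infty$) but $\mathrm{Reg}_{\tilde\ell}(\mathbf p^{(T)},\mathbf x^{(T)})\ge cT$.
   Context: A binary scoring rule is a function $\ell:[0,1]\times\{0,1\}\to\mathbb{R}$. For $p,q\in[0,1]$ write $\ell(p;q)=(1-q)\ell(p,0)+q\ell(p,1)$. It is proper if $\ell(p;p)\le\ell(p';p)$ for all $p,p'\in[0,1]$, and bounded if all its values lie in $[-1,1]$. For outcomes $\mathbf x\in\{0,1\}^T$ and forecasts $\mathbf p\in[0,1]^T$, with base rate $\beta=\frac1T\sum_t x_t$, the regret is $\mathrm{Reg}_\ell(\mathbf p,\mathbf x)=\sum_{t=1}^T\ell(p_t,x_t)-\sum_{t=1}^T\ell(\beta,x_t)$. *)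

From mathcomp Require Import all_boot all_order all_algebra.
From mathcomp Require Import reals.
Set Implicit Arguments. Unset Strict Implicit. Unset Printing Implicit Defensive.
Import Order.TTheory GRing.Theory Num.Theory.
Local Open Scope ring_scope.

(* A binary scoring rule l : [0,1] x {0,1} -> R; outcomes encoded as bool
   (false = 0, true = 1); only values at p in [0,1] matter. *)
Definition exp_score {R : realType} (l : R -> bool -> R) (p q : R) : R :=
  (1 - q) * l p false + q * l p true.

Definition proper_rule {R : realType} (l : R -> bool -> R) : Prop :=
  forall p p' : R, 0 <= p <= 1 -> 0 <= p' <= 1 ->
    exp_score l p p <= exp_score l p' p.

Definition bounded_rule {R : realType} (l : R -> bool -> R) : Prop :=
  forall (p : R) (x : bool), 0 <= p <= 1 -> -1 <= l p x <= 1.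

Definition base_rate {R : realType} (T : nat) (x : nat -> bool) : R :=
  (\sum_(t < T) ((x t : nat)%:R : R)) / T%:R.

Definition regret {R : realType} (l : R -> bool -> R) (T : nat)
  (p : nat -> R) (x : nat -> bool) : R :=
  \sum_(t < T) l (p t) (x t) - \sum_(t < T) l (base_rate T x) (x t).

(* Properness makes the slope s(p) = l(p,1) - l(p,0) nonincreasing on [0,1], and moreover
   |l(u,x) - l(v,x)| <= s(u) - s(v) whenever u <= v.  Being monotone, s is continuous at some
   c in (0,1).  Forecast just below c on the first floor(cT) rounds, whose outcome is 1, and
   just above c on the others, whose outcome is 0: forecasts and base rate all lie within 1/T
   of c, so continuity of s at c makes the l-regret o(T).  Under the V-shaped rule with kink c,
   however, each of these forecasts lies on the wrong side of c for its outcome and costs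
   |c - x_t|, while the constant base-rate forecast earns |beta - c| per round, so the regret
   is at least 2c(1-c)T. *)

From mathcomp Require Import all_boot all_order all_algebra.
From mathcomp Require Import reals classical_sets.
From mathcomp Require Import ring lra zify.
Set Implicit Arguments.
Unset Strict Implicit.
Unset Printing Implicit Defensive.

Import Order.TTheory GRing.Theory Num.Theory.
Local Open Scope classical_set_scope.
Local Open Scope ring_scope.

Section ContinuityPoint.

Variables (R : realType) (f : R -> R) (a b : R).
Hypothesis lt_ab : a < b.
Hypothesis f_nonincr : forall u v, a <= u -> u <= v -> v <= b -> f v <= f u.

(* Of the two middle quarters of [u, v], keep the one on which f drops least: the drop at
   least halves and the new interval lies strictly inside [u, v]. *)
Definition quarter_step (uv : R * R) : R * R :=
  let: (u, v) := uv in
  let m := (u + v) / 2 in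
  let u' := (3 * u + v) / 4 in
  let v' := (u + 3 * v) / 4 in
  if f u' - f m <= f m - f v' then (u', m) else (m, v').

Lemma quarter_step_inner u v : a <= u -> u < v -> v <= b ->
  let: (u', v') := quarter_step (u, v) in
  [/\ u < u', u' < v', v' < v & 2 * (f u' - f v') <= f u - f v].
Proof.
move=> au uv vb /=.
set m := (u + v) / 2; set u' := (3 * u + v) / 4; set v' := (u + 3 * v) / 4.
have [uu' u'm mv' v'v] : [/\ u < u', u' < m, m < v' & v' < v].
  by rewrite /u' /m /v'; split; lra.
have mono x y : u <= x -> x <= y -> y <= v -> f y <= f x.
  by move=> *; apply: f_nonincr; lra.
have d1 : f u' <= f u by apply: mono; lra.
have d2 : f m <= f u' by apply: mono; lra.
have d3 : f v' <= f m by apply: mono; lra.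
have d4 : f v <= f v' by apply: mono; lra.
by case: lerP => /= small; split; lra.
Qed.

Definition nested_itv (k : nat) : R * R := iter k quarter_step (a, b).

Local Notation lo k := (nested_itv k).1.
Local Notation hi k := (nested_itv k).2.

Lemma nested_itvS k : nested_itv k.+1 = quarter_step (lo k, hi k).
Proof. by rewrite /nested_itv iterS; case: (iter _ _ _). Qed.

Lemma nested_itv_spec k :
  [/\ a <= lo k, lo k < hi k, hi k <= b & 2 ^+ k * (f (lo k) - f (hi k)) <= f a - f b].
Proof.
elim: k => [|k [alo lohi hib drop]].
  by rewrite /nested_itv /= expr0 mul1r; split.
rewrite nested_itvS.
have := quarter_step_inner alo lohi hib; case: quarter_step => u' v' /= [? ? ? half].
split; [lra | lra | lra |].
by rewrite exprS -mulrA; apply: le_trans drop; rewrite mulrCA ler_pM2l ?exprn_gt0.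
Qed.

Lemma nested_itv_strict k : lo k < lo k.+1 /\ hi k.+1 < hi k.
Proof.
have [alo lohi hib _] := nested_itv_spec k.
rewrite nested_itvS.
by have := quarter_step_inner alo lohi hib; case: quarter_step => u' v' /= [].
Qed.

Lemma nested_itv_mono i j : (i <= j)%N -> lo i <= lo j /\ hi j <= hi i.
Proof.
move=> /subnK <-; elim: (j - i)%N => [|d [lo_le hi_le]]; first by rewrite add0n.
have [lo_lt hi_lt] := nested_itv_strict (d + i).
by split; [exact: le_trans (ltW lo_lt) | exact: le_trans (ltW hi_lt) hi_le].
Qed.

Lemma nested_itv_lo_lt_hi i j : lo i < hi j.
Proof.
have [lo_le _] := nested_itv_mono (leq_maxl i j).
have [_ hi_le] := nested_itv_mono (leq_maxr i j).
have [_ lohi _ _] := nested_itv_spec (maxn i j).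
exact: le_lt_trans lo_le (lt_le_trans lohi hi_le).
Qed.

Lemma nonincreasing_continuity_point :
  exists2 c, a < c < b & forall eps, 0 < eps ->
    exists u v, [/\ a <= u, u < c, c < v, v <= b & f u - f v <= eps].
Proof.
pose c := sup (range (fun k => lo k)).
have hi_ub k : ubound (range (fun k => lo k)) (hi k).
  by move=> _ [i _ <-]; exact: ltW (nested_itv_lo_lt_hi i k).
have lo_ne : range (fun k => lo k) !=set0 by exists a, 0%N.
have lo_sup : has_sup (range (fun k => lo k)) by split => //; exists b; exact: hi_ub 0%N.
have lo_lt_c k : lo k < c.
  by apply: lt_le_trans (nested_itv_strict k).1 (sup_upper_bound lo_sup _); exists k.+1.
have c_lt_hi k : c < hi k.
  exact: le_lt_trans (ge_sup lo_ne (hi_ub k.+1)) (nested_itv_strict k).2.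
exists c; first by rewrite (lo_lt_c 0%N) (c_lt_hi 0%N).
move=> eps eps_gt0; pose k := Num.bound ((f a - f b) / eps).
have [alo _ hib drop] := nested_itv_spec k.
exists (lo k), (hi k); split; [exact: alo | exact: lo_lt_c | exact: c_lt_hi | exact: hib |].
have drop_ge0 : 0 <= f a - f b by rewrite subr_ge0; apply: f_nonincr => //; exact: ltW.
have k_gt : (f a - f b) / eps < k%:R by apply/archi_boundP/divr_ge0/ltW.
have k_lt : k%:R < 2 ^+ k :> R by rewrite -natrX ltr_nat ltn_expl.
rewrite ltr_pdivrMr // in k_gt.
have pow_gt0 : 0 < 2 ^+ k :> R by exact: exprn_gt0.
nra.
Qed.

End ContinuityPoint.

Section ProperRules.

Variables (R : realType) (l : R -> bool -> R).
Hypothesis l_proper : proper_rule l.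

Definition score_slope (p : R) : R := l p true - l p false.

Lemma proper_score_gap u v : 0 <= u -> u <= v -> v <= 1 ->
  v * (score_slope v - score_slope u) <= l u false - l v false
  <= u * (score_slope v - score_slope u).
Proof.
move=> u_ge0 uv v_le1.
have u01 : 0 <= u <= 1 by apply/andP; lra.
have v01 : 0 <= v <= 1 by apply/andP; lra.
have := l_proper u01 v01; have := l_proper v01 u01.
by rewrite /exp_score /score_slope => *; apply/andP; lra.
Qed.

Lemma score_slope_nonincr u v : 0 <= u -> u <= v -> v <= 1 ->
  score_slope v <= score_slope u.
Proof.
move=> u_ge0 uv v_le1; have /andP[gap_lo gap_hi] := proper_score_gap u_ge0 uv v_le1.
by move: uv; rewrite le_eqVlt => /predU1P[-> // | ltuv]; nra.
Qed.

Lemma proper_score_dist u v x : 0 <= u -> u <= v -> v <= 1 ->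
  `|l u x - l v x| <= score_slope u - score_slope v.
Proof.
move=> u_ge0 uv v_le1; have /andP[gap_lo gap_hi] := proper_score_gap u_ge0 uv v_le1.
have := score_slope_nonincr u_ge0 uv v_le1.
by rewrite ler_norml /score_slope in gap_lo gap_hi *; case: x; nra.
Qed.

Lemma proper_score_dist_within u v p q x : 0 <= u -> v <= 1 ->
  u <= p <= v -> u <= q <= v ->
  `|l p x - l q x| <= score_slope u - score_slope v.
Proof.
move=> u_ge0 v_le1.
wlog pq : p q / p <= q => [wlog_pq|/andP[up pv] /andP[uq qv]].
  by move=> Hp Hq; case: (lerP p q) => [|/ltW] pq; last rewrite distrC; apply: wlog_pq.
have := proper_score_dist x (le_trans u_ge0 up) pq (le_trans qv v_le1).
have := score_slope_nonincr u_ge0 up (le_trans pq (le_trans qv v_le1)).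
have := score_slope_nonincr (le_trans u_ge0 uq) qv v_le1.
lra.
Qed.

Lemma regret_abs_le u v T p x : 0 <= u -> v <= 1 ->
  (forall t, (t < T)%N -> u <= p t <= v) -> u <= base_rate T x <= v ->
  `|regret l T p x| <= T%:R * (score_slope u - score_slope v).
Proof.
move=> u_ge0 v_le1 p_in beta_in.
have term_le (t : 'I_T) :
    `|l (p t) (x t) - l (base_rate T x) (x t)| <= score_slope u - score_slope v.
  exact: proper_score_dist_within (p_in t (ltn_ord t)) beta_in.
rewrite /regret -sumrB (le_trans (ler_norm_sum _ _ _)) //.
apply: le_trans (ler_sum _ (fun t _ => term_le t)) _.
by rewrite sumr_const card_ord mulr_natl.
Qed.

End ProperRules.

Lemma base_rate_sum {R : realType} T x :
  base_rate T x * T%:R = \sum_(t < T) (x t : nat)%:R :> R.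
Proof.
by case: T => [|T]; rewrite /base_rate ?big_ord0 ?mulr0 // divfK // pnatr_eq0.
Qed.

Section VShapedRule.

Variables (R : realType) (c : R).

(* Expected score under q: sg(p - c) * (c - q), minimal (equal to -|q - c|) at p = q. *)
Definition vshaped_rule (p : R) (x : bool) : R := Num.sg (p - c) * (c - (x : nat)%:R).

Lemma vshaped_rule_proper : proper_rule vshaped_rule.
Proof.
move=> p p' _ _.
have exp_scoreE q : exp_score vshaped_rule q p = Num.sg (q - c) * (c - p).
  by rewrite /exp_score /vshaped_rule /=; ring.
rewrite !exp_scoreE.
have -> : Num.sg (p - c) * (c - p) = - `|c - p| by rewrite distrC normrEsg -mulrN opprB.
have : `|Num.sg (p' - c) * (c - p)| <= `|c - p|.
  by rewrite normrM normr_sg; case: eqP; rewrite ?mul0r ?mul1r.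
by rewrite ler_norml => /andP[].
Qed.

Lemma vshaped_regret T p x :
  (forall t, (t < T)%N -> if x t then p t < c else c < p t) ->
  let beta := base_rate T x in
  regret vshaped_rule T p x = T%:R * (beta * (1 - c) + (1 - beta) * c + `|beta - c|).
Proof.
move=> sides beta.
have forecast_term (t : 'I_T) :
    vshaped_rule (p t) (x t) = c + (x t : nat)%:R * (1 - 2 * c).
  have := sides t (ltn_ord t); rewrite /vshaped_rule.
  case: (x t) => /= side.
    by rewrite ltr0_sg ?subr_lt0 //; ring.
  by rewrite gtr0_sg ?subr_gt0 //; ring.
have X := base_rate_sum (R := R) T x; rewrite -/beta in X.
rewrite /regret (eq_bigr _ (fun t _ => forecast_term t)) big_split /= -mulr_suml.
rewrite /vshaped_rule -/beta -mulr_sumr sumrB !sumr_const card_ord -X.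
rewrite normrEsg; ring.
Qed.

Lemma vshaped_regret_ge T p x : 0 <= c <= 1 ->
  (forall t, (t < T)%N -> if x t then p t < c else c < p t) ->
  2 * c * (1 - c) * T%:R <= regret vshaped_rule T p x.
Proof.
move=> /andP[c_ge0 c_le1] sides; rewrite (vshaped_regret sides) mulrC ler_wpM2l //.
by case: (lerP (base_rate T x) c) => beta_c; nra.
Qed.

End VShapedRule.

Lemma sum_prefix_indicator (R : pzSemiRingType) n T :
  \sum_(t < T) ((t < n)%N : nat)%:R = (minn n T)%:R :> R.
Proof.
elim: T => [|T IH]; first by rewrite big_ord0 minn0.
by rewrite big_ord_recr /= IH -natrD; congr _%:R; lia.
Qed.

Section Straddle.

Variables (R : realType) (c : R).

Definition straddle_ones (T : nat) : nat := Num.truncn (c * T%:R).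

Definition straddle_outcome (T t : nat) : bool := (t < straddle_ones T)%N.

(* Both values lie in [0, 1] for T >= 1 and within 1/T of c. *)
Definition straddle_forecast (T t : nat) : R :=
  if straddle_outcome T t then c - c / T%:R else c + (1 - c) / T%:R.

Lemma straddle_ones_spec T : 0 <= c ->
  (straddle_ones T)%:R <= c * T%:R < (straddle_ones T).+1%:R.
Proof. by move=> c_ge0; apply: truncn_itv; rewrite mulr_ge0. Qed.

Lemma base_rate_straddle T : 0 <= c -> c <= 1 -> (0 < T)%N ->
  c - T%:R^-1 <= base_rate T (straddle_outcome T) <= c.
Proof.
move=> c_ge0 c_le1 T_gt0; have /andP[ones_le ones_gt] := straddle_ones_spec T c_ge0.
have ones_leT : (straddle_ones T <= T)%N.
  by rewrite -(ler_nat R); apply: le_trans ones_le _; rewrite ler_piMl.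
have T_pos : 0 < T%:R :> R by rewrite ltr0n.
have TV : T%:R * T%:R^-1 = 1 :> R by rewrite mulfV // gt_eqF.
have := base_rate_sum (R := R) T (straddle_outcome T).
rewrite sum_prefix_indicator (minn_idPl ones_leT) -natr1 in ones_gt *; nra.
Qed.

Lemma straddle_forecast_spec T t : 0 < c -> c < 1 -> (t < T)%N ->
  [/\ 0 <= straddle_forecast T t <= 1,
      c - T%:R^-1 <= straddle_forecast T t <= c + T%:R^-1
    & if straddle_outcome T t then straddle_forecast T t < c
      else c < straddle_forecast T t].
Proof.
move=> c_gt0 c_lt1 tT.
have T_ge1 : 1 <= T%:R :> R by rewrite ler1n (leq_ltn_trans _ tT).
have iT_gt0 : 0 < T%:R^-1 :> R by rewrite invr_gt0; lra.
have iT_le1 : T%:R^-1 <= 1 :> R by rewrite invf_le1; lra.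
by rewrite /straddle_forecast; case: straddle_outcome; split; try apply/andP; try split; nra.
Qed.

Lemma straddle_regret_abs_le (l : R -> bool -> R) u v : proper_rule l ->
  0 <= u -> u < c -> c < v -> v <= 1 ->
  exists N, forall T, (N <= T)%N ->
    `|regret l T (straddle_forecast T) (straddle_outcome T)|
      <= T%:R * (score_slope l u - score_slope l v).
Proof.
move=> l_proper u_ge0 uc cv v_le1.
have c_gt0 := le_lt_trans u_ge0 uc; have c_lt1 := lt_le_trans cv v_le1.
have delta_gt0 : 0 < Num.min (c - u) (v - c) by rewrite lt_min !subr_gt0 uc cv.
exists (Num.bound (Num.min (c - u) (v - c))^-1) => T TN.
have T_gt : (Num.min (c - u) (v - c))^-1 < T%:R.
  by apply: lt_le_trans (archi_boundP _) _; rewrite ?ler_nat // invr_ge0 ltW.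
have T_pos : 0 < T%:R :> R by apply: lt_trans T_gt; rewrite invr_gt0.
have : T%:R^-1 < Num.min (c - u) (v - c) by rewrite invf_plt ?posrE.
rewrite lt_min => /andP[iT_u iT_v].
apply: regret_abs_le => //.
  move=> t tT; have [_ /andP[f_lo f_hi] _] := straddle_forecast_spec c_gt0 c_lt1 tT.
  by apply/andP; lra.
have T_gt0 : (0 < T)%N by rewrite -(ltr0n R).
have /andP[b_lo b_hi] := base_rate_straddle (ltW c_gt0) (ltW c_lt1) T_gt0.
by apply/andP; lra.
Qed.

End Straddle.

Theorem theorem3p2 (R : realType) (l : R -> bool -> R) :
  proper_rule l -> bounded_rule l ->
  exists (lt : R -> bool -> R) (c : R),
    proper_rule lt /\ 0 < c /\
    exists (T0 : nat) (p : nat -> nat -> R) (x : nat -> nat -> bool),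
      (forall T t : nat, (T0 <= T)%N -> (t < T)%N -> 0 <= p T t <= 1) /\
      (forall eps : R, 0 < eps -> exists N : nat, forall T : nat,
          (N <= T)%N -> `|regret l T (p T) (x T)| <= eps * T%:R) /\
      (forall T : nat, (T0 <= T)%N -> c * T%:R <= regret lt T (p T) (x T)).
Proof.
move=> l_proper _.
have [c /andP[c_gt0 c_lt1] slope_osc] :=
  nonincreasing_continuity_point ltr01 (score_slope_nonincr l_proper).
exists (vshaped_rule c), (2 * c * (1 - c)); split; first exact: vshaped_rule_proper.
split; first by rewrite !mulr_gt0 // subr_gt0.
exists 0%N, (straddle_forecast c), (straddle_outcome c); split; [|split].
- by move=> T t _ /(straddle_forecast_spec c_gt0 c_lt1)[].
- move=> eps eps_gt0; have [u [v [u_ge0 uc cv v_le1 slope_le]]] := slope_osc eps eps_gt0.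
  have [N regret_le] := straddle_regret_abs_le l_proper u_ge0 uc cv v_le1.
  exists N => T /regret_le /le_trans; apply.
  by rewrite mulrC ler_wpM2r.
- move=> T _; apply: vshaped_regret_ge => [|t /(straddle_forecast_spec c_gt0 c_lt1)[] //].
  by rewrite !ltW.
Qed.
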